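(* Let $B$ be a supersoluble brace. Then $(B,+)$ is nilpotent if and only if there is $n\in\mathbb{N}$ such that $B=\operatorname{Soc}_n(B)$.
   Context: A brace (skew left brace) is a set $B$ with two binary operations $+$ and $\cdot$ such that $(B,+)$ and $(B,\cdot)$ are groups and $a(b+c)=ab-a+ac$ for all $a,b,c\in B$. $\lambda_a(b)=-a+ab$ defines a homomorphism $\lambda\colon(B,\cdot)\to\operatorname{Aut}(B,+)$. An ideal is a subset that is a subgroup of both groups, normal in both, and invariant under all $\lambda_b$; quotients by ideals are braces. $\operatorname{Soc}(B)=\operatorname{Ker}\lambda\cap Z(B,+)$ is an ideal. Put $\operatorname{Soc}_0(B)=\{0\}$ and define $\operatorname{Soc}_{k+1}(B)$ by $\operatorname{Soc}_{k+1}(B)/\operatorname{Soc}_k(B)=\operatorname{Soc}(B/\operatorname{Soc}_k(B))$. $B$ is supersoluble if there is a finite chain of ideals $\{0\}=I_0\le\dots\le I_n=B$ such that for each $i$, either $(I_{i+1}/I_i,+)$ is infinite cyclic and $I_{i+1}/I_i\le\operatorname{Soc}(B/I_i)$, or $I_{i+1}/I_i$ has prime order. *)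

From mathcomp Require Import all_boot.
Set Implicit Arguments. Unset Strict Implicit. Unset Printing Implicit Defensive.

Record brace := Brace {
  car :> Type;
  badd : car -> car -> car;
  bzero : car;
  bopp : car -> car;
  bmul : car -> car -> car;
  bone : car;
  binv : car -> car;
  baddA : forall a b c, badd a (badd b c) = badd (badd a b) c;
  badd0l : forall a, badd bzero a = a;
  badd0r : forall a, badd a bzero = a;
  baddNl : forall a, badd (bopp a) a = bzero;
  baddNr : forall a, badd a (bopp a) = bzero;
  bmulA : forall a b c, bmul a (bmul b c) = bmul (bmul a b) c;
  bmul1l : forall a, bmul bone a = a;
  bmul1r : forall a, bmul a bone = a;
  bmulVl : forall a, bmul (binv a) a = bone;
  bmulVr : forall a, bmul a (binv a) = bone;
  bbrace : forall a b c,
    bmul a (badd b c) = badd (badd (bmul a b) (bopp a)) (bmul a c)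
}.

Arguments badd {b0}. Arguments bzero {b0}. Arguments bopp {b0}.
Arguments bmul {b0}. Arguments bone {b0}. Arguments binv {b0}.

Section BraceDefs.
Variable B : brace.
Local Notation "a + b" := (badd a b).
Local Notation "- a" := (bopp a).
Local Notation "a * b" := (bmul a b).

Definition blambda (a b : B) : B := - a + a * b.

Definition acomm (a b : B) : B := - (b + a) + (a + b).

Fixpoint nmul (n : nat) (g : B) : B :=
  match n with O => bzero | S k => g + nmul k g end.

(* congruence modulo a normal subgroup I of (B,+): x + I = y + I *)
Definition congr (I : B -> Prop) (x y : B) : Prop := I (- y + x).

Definition is_ideal (I : B -> Prop) : Prop :=
  I bzero /\
  (forall x y, I x -> I y -> I (x + y)) /\
  (forall x, I x -> I (- x)) /\
  (forall x y, I x -> I y -> I (x * y)) /\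
  (forall x, I x -> I (binv x)) /\
  (forall x b, I x -> I (b + x + - b)) /\
  (forall x b, I x -> I (b * x * binv b)) /\
  (forall x b, I x -> I (blambda b x)).

(* x + I belongs to Soc(B/I) = Ker lambda ∩ Z(B/I,+), written out on
   representatives: lambda_{[a]}([b]) = [b] and [a]+[b] = [b]+[a]. *)
Definition in_soc_mod (I : B -> Prop) (a : B) : Prop :=
  forall b, congr I (blambda a b) b /\ I (acomm a b).

(* Soc_0 = 0, Soc_{k+1}/Soc_k = Soc(B/Soc_k) *)
Fixpoint soc_n (k : nat) : B -> Prop :=
  match k with
  | O => fun x => x = bzero
  | S k' => fun a => in_soc_mod (soc_n k') a
  end.

Fixpoint zeta_n (k : nat) : B -> Prop :=
  match k with
  | O => fun x => x = bzero
  | S k' => fun a => forall b, zeta_n k' (acomm a b)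
  end.

Definition add_nilpotent : Prop := exists n, forall x : B, zeta_n n x.

Definition factor_inf_cyclic (I J : B -> Prop) : Prop :=
  (exists g, J g /\ forall x, J x -> exists n,
       congr I x (nmul n g) \/ congr I x (- nmul n g)) /\
  ~ (exists (k : nat) (f : nat -> B), forall x, J x ->
        exists2 i, i < k & congr I x (f i)).

Definition factor_prime_order (I J : B -> Prop) : Prop :=
  exists p, prime p /\ exists f : nat -> B,
    [/\ (forall i, i < p -> J (f i)),
        (forall i j, i < p -> j < p -> congr I (f i) (f j) -> i = j)
      & (forall x, J x -> exists2 i, i < p & congr I x (f i))].

Definition supersoluble : Prop :=
  exists (n : nat) (I : nat -> B -> Prop),
    [/\ (forall x, I 0 x <-> x = bzero),
        (forall x, I n x),
        (forall i, i <= n -> is_ideal (I i)),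
        (forall i x, i < n -> I i x -> I i.+1 x)
      & (forall i, i < n ->
           (factor_inf_cyclic (I i) (I i.+1) /\
            (forall x, I i.+1 x -> in_soc_mod (I i) x))
           \/ factor_prime_order (I i) (I i.+1))].

End BraceDefs.

From HB Require Import structures.
From mathcomp Require Import all_boot fingroup.
From mathcomp Require Import boolp.
From Stdlib Require Import Setoid.
Set Implicit Arguments. Unset Strict Implicit. Unset Printing Implicit Defensive.

(** Soc_k(B) is contained in the k-th centre of (B,+), which gives one
    direction.  Conversely, when (B,+) is nilpotent we show I_k <= Soc_k(B)
    along a supersoluble chain of ideals.  Infinite cyclic factors lie in the
    socle by assumption.  For a factor J/I of prime order, nilpotency of
    (B,+) yields an element of J \ I central modulo I; since every subgroup
    of J/I containing a nontrivial coset is all of J/I (Lagrange), J/I is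
    central in (B,+)/I.  For a in J the map y |-> -y + lambda_a(y) is then a
    homomorphism from (B,+) to J/I; were it nontrivial it would be onto, giving
    b with lambda_a(b) = -a + b modulo I, i.e. ab = b modulo I, which forces
    a in I.  So lambda acts trivially modulo I and J/I <= Soc(B/I). *)

Local Infix "⊕" := badd (at level 50, left associativity).
Local Notation "⊖ a" := (bopp a) (at level 35, right associativity).
Local Infix "⊙" := bmul (at level 40, left associativity).

Section BraceArith.
Variable B : brace.
Implicit Types a b c x y z : B.

Lemma baddKr a b : ⊖ a ⊕ (a ⊕ b) = b.
Proof. by rewrite baddA baddNl badd0l. Qed.

Lemma baddNKr a b : a ⊕ (⊖ a ⊕ b) = b.
Proof. by rewrite baddA baddNr badd0l. Qed.

Lemma baddrK a b : b ⊕ a ⊕ ⊖ a = b.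
Proof. by rewrite -baddA baddNr badd0r. Qed.

Lemma baddrI a b c : a ⊕ b = a ⊕ c -> b = c.
Proof. by move=> e; rewrite -(baddKr a b) e baddKr. Qed.

Lemma baddIr a b c : b ⊕ a = c ⊕ a -> b = c.
Proof. by move=> e; rewrite -(baddrK a b) e baddrK. Qed.

Lemma boppK a : ⊖ ⊖ a = a.
Proof. by apply: (@baddrI (⊖ a)); rewrite baddNr baddNl. Qed.

Lemma bopp0 : ⊖ (bzero : B) = bzero.
Proof. by rewrite -[⊖ _]badd0l baddNr. Qed.

Lemma boppD a b : ⊖ (a ⊕ b) = ⊖ b ⊕ ⊖ a.
Proof. by apply: (@baddrI (a ⊕ b)); rewrite baddNr -baddA baddNKr baddNr. Qed.

Lemma bmulrI a b c : a ⊙ b = a ⊙ c -> b = c.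
Proof.
by move=> e; rewrite -(bmul1l b) -(bmulVl a) -bmulA e bmulA bmulVl bmul1l.
Qed.

Lemma binvK a : binv (binv a) = a.
Proof. by apply: (@bmulrI (binv a)); rewrite bmulVl bmulVr. Qed.

(* The brace axiom at b = c = 0 reads a0 = a0 - a + a0. *)
Lemma bmul_zero a : a ⊙ bzero = a.
Proof.
have e := bbrace a bzero bzero; rewrite badd0l in e.
have e0 : bzero = a ⊙ bzero ⊕ ⊖ a.
  by apply: (@baddIr (a ⊙ bzero)); rewrite badd0l -e.
by apply: (@baddIr (⊖ a)); rewrite -e0 baddNr.
Qed.

Lemma bone_zero : (bone : B) = bzero.
Proof. by rewrite -(bmul1l bzero) bmul_zero. Qed.

Lemma bmul_lambda a b : a ⊙ b = a ⊕ blambda a b.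
Proof. by rewrite /blambda baddNKr. Qed.

Lemma blambdaD a b c : blambda a (b ⊕ c) = blambda a b ⊕ blambda a c.
Proof. by rewrite /blambda bbrace !baddA. Qed.

Lemma blambda0 a : blambda a bzero = bzero.
Proof. by rewrite /blambda bmul_zero baddNl. Qed.

End BraceArith.

Record nsg (B : brace) := NSG {
  nsg_mem :> B -> Prop;
  nsg0 : nsg_mem bzero;
  nsgD : forall x y, nsg_mem x -> nsg_mem y -> nsg_mem (x ⊕ y);
  nsgN : forall x, nsg_mem x -> nsg_mem (⊖ x);
  nsgJ : forall x b, nsg_mem x -> nsg_mem (b ⊕ x ⊕ ⊖ b) }.

Section Congruence.
Variables (B : brace) (N : nsg B).
Implicit Types a b c x y z : B.

Lemma congr_refl x : congr N x x.
Proof. by rewrite /congr baddNl; apply: nsg0. Qed.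

Lemma congr_sym x y : congr N x y -> congr N y x.
Proof. by rewrite /congr => /nsgN; rewrite boppD boppK. Qed.

Lemma congr_trans x y z : congr N x y -> congr N y z -> congr N x z.
Proof.
by rewrite /congr => Nyx Nzy; have := nsgD Nzy Nyx; rewrite -baddA baddNKr.
Qed.

Lemma congr_add x x' y y' :
  congr N x x' -> congr N y y' -> congr N (x ⊕ y) (x' ⊕ y').
Proof.
rewrite /congr => Nx Ny; have := nsgD Ny (nsgJ (⊖ y) Nx).
by rewrite boppK boppD -!baddA baddNKr.
Qed.

Lemma congr_opp x x' : congr N x x' -> congr N (⊖ x) (⊖ x').
Proof.
rewrite /congr boppK => Nx.
by have := nsgN (nsgJ x' Nx); rewrite baddNKr boppD boppK.
Qed.

Lemma congr0P x : congr N x bzero <-> N x.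
Proof. by rewrite /congr bopp0 badd0l. Qed.

Lemma acomm_nsg a b : N a -> N (acomm a b).
Proof.
move=> Na; have := nsgD (nsgN Na) (nsgJ (⊖ b) Na).
by rewrite /acomm boppD boppK !baddA.
Qed.

End Congruence.

Add Parametric Relation (B : brace) (N : nsg B) : (car B) (congr N)
  reflexivity proved by (@congr_refl B N)
  symmetry proved by (@congr_sym B N)
  transitivity proved by (@congr_trans B N) as congr_rel.
#[local] Hint Resolve congr_refl : core.

Add Parametric Morphism (B : brace) (N : nsg B) : (@badd B)
  with signature congr N ==> congr N ==> congr N as badd_congr.
Proof. by move=> x x' ex y y' ey; apply: congr_add. Qed.

Add Parametric Morphism (B : brace) (N : nsg B) : (@bopp B)
  with signature congr N ==> congr N as bopp_congr.
Proof. by move=> x x'; apply: congr_opp. Qed.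

Section Ideal.
Variables (B : brace) (I : B -> Prop) (hI : is_ideal I).
Implicit Types a b c x y z : B.

Let ideal0 : I bzero.
Proof. by case: hI. Qed.

Let idealD x y : I x -> I y -> I (x ⊕ y).
Proof. by case: hI => _ [D _]; apply: D. Qed.

Let idealN x : I x -> I (⊖ x).
Proof. by case: hI => _ [_ [N _]]; apply: N. Qed.

Let idealJ x b : I x -> I (b ⊕ x ⊕ ⊖ b).
Proof. by case: hI => _ [_ [_ [_ [_ [J _]]]]]; apply: J. Qed.

Definition ideal_nsg : nsg B := NSG ideal0 idealD idealN idealJ.

Lemma ideal_mulJ x b : I x -> I (b ⊙ x ⊙ binv b).
Proof. by case: hI => _ [_ [_ [_ [_ [_ [MJ _]]]]]]; apply: MJ. Qed.

Lemma ideal_lambda x b : I x -> I (blambda b x).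
Proof. by case: hI => _ [_ [_ [_ [_ [_ [_ L]]]]]]; apply: L. Qed.

(* ax = x a' with a' = x^-1 a x in I, so -x + lambda_a(x) is the sum of the
   conjugate -x - a + x and lambda_x(a'). *)
Lemma ideal_lambda_congr a x : I a -> congr I (blambda a x) x.
Proof.
move=> Ia; rewrite /congr; set a' := binv x ⊙ a ⊙ binv (binv x).
have Ia' : I a' by apply: ideal_mulJ.
have e : a ⊙ x = x ⊙ a' by rewrite /a' binvK !bmulA bmulVr bmul1l.
have -> : ⊖ x ⊕ blambda a x = (⊖ x ⊕ ⊖ a ⊕ ⊖ ⊖ x) ⊕ blambda x a'.
  by rewrite boppK /blambda e !baddA baddrK.
by apply: idealD; [apply/idealJ/idealN | apply: ideal_lambda].
Qed.

(* With ab = b + i and i in I, b^-1 a b = lambda_{b^-1}(i). *)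
Lemma ideal_congr_mul a b : congr I (a ⊙ b) b -> I a.
Proof.
rewrite /congr; set i := ⊖ b ⊕ a ⊙ b => Ii.
have e : a ⊙ b = b ⊕ i by rewrite /i baddNKr.
have Ij : I (binv b ⊙ (a ⊙ b)).
  by rewrite e bbrace bmulVl bone_zero badd0l; apply: ideal_lambda.
have := ideal_mulJ b Ij.
by rewrite bmulA bmulVr bmul1l -bmulA bmulVr bmul1r.
Qed.

End Ideal.

Lemma in_soc_mod_sub (B : brace) (I J : B -> Prop) a :
  (forall x, I x -> J x) -> in_soc_mod I a -> in_soc_mod J a.
Proof. by move=> IJ socIa b; have [] := socIa b; split; apply: IJ. Qed.

Lemma soc_n_sub_zeta_n (B : brace) k (x : B) : soc_n k x -> zeta_n k x.
Proof. by elim: k x => [|k IH] x //= socx b; apply/IH/(socx b).2. Qed.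

Section GroupLawLagrange.
Variables (n : nat) (mul : 'I_n -> 'I_n -> 'I_n).
Variables (one : 'I_n) (inv : 'I_n -> 'I_n).
Hypotheses (mulA : associative mul) (mul1 : left_id one mul)
  (mulV : left_inverse one inv mul).
Definition group_of_law : Type := 'I_n.
HB.instance Definition _ := Finite.on group_of_law.
HB.instance Definition _ := Finite_isGroup.Build group_of_law mulA mul1 mulV.

Lemma card_mul_closed_dvdn (K : {pred 'I_n}) :
  one \in K -> {in K &, forall x y, mul x y \in K} -> #|K| %| n.
Proof.
move=> K1 KM.
have gK : group_set [set x : group_of_law | x \in K].
  by apply/group_setP; split=> [|x y]; rewrite !inE //; apply: KM.
by have := cardSg (subsetT (Group gK)); rewrite /= cardsT card_ord cardsE.
Qed.

End GroupLawLagrange.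

Section PrimeFactor.
Variables (B : brace) (N J : nsg B) (p : nat) (f : nat -> B).
Hypotheses (p_pr : prime p) (fJ : forall i, i < p -> J (f i))
  (f_inj : forall i j, i < p -> j < p -> congr N (f i) (f j) -> i = j)
  (f_cover : forall x, J x -> exists2 i, i < p & congr N x (f i)).
Implicit Types x y : B.

Let fJ' (i : 'I_p) : J (f i) := fJ (ltn_ord i).

Let idx x : 'I_p :=
  odflt (Ordinal (prime_gt0 p_pr)) [pick i : 'I_p | `[< congr N x (f i) >]].

Let idxP x : J x -> congr N x (f (idx x)).
Proof.
case/f_cover=> i lt_ip xi; rewrite /idx; case: pickP => [j /asboolP xj //|].
by move/(_ (Ordinal lt_ip)); rewrite asboolT.
Qed.

Let idx_congr x y : J x -> J y -> congr N x y -> idx x = idx y.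
Proof.
move=> Jx Jy xy; apply/val_inj/f_inj; rewrite ?ltn_ord //.
by rewrite -(idxP Jx) -(idxP Jy).
Qed.

Let idx_f (i : 'I_p) : idx (f i) = i.
Proof. by apply/val_inj/f_inj; rewrite ?ltn_ord //; exact/congr_sym/idxP/fJ'. Qed.

Let mulq (i j : 'I_p) := idx (f i ⊕ f j).
Let oneq := idx bzero.
Let invq (i : 'I_p) := idx (⊖ f i).

Let J0 : J bzero := nsg0 J.
Let fJD (i j : 'I_p) : J (f i ⊕ f j) := nsgD (fJ' i) (fJ' j).
Let fJN (i : 'I_p) : J (⊖ f i) := nsgN (fJ' i).

Let mulqA : associative mulq.
Proof.
move=> i j k; apply: idx_congr => //.
by rewrite -(idxP (fJD i j)) -(idxP (fJD j k)) baddA.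
Qed.

Let mul1q : left_id oneq mulq.
Proof.
move=> i; rewrite -[RHS]idx_f; apply: idx_congr => //.
by rewrite -(idxP J0) badd0l.
Qed.

Let mulVq : left_inverse oneq invq mulq.
Proof.
move=> i; apply: idx_congr => //.
by rewrite /invq -(idxP (fJN i)) baddNl.
Qed.

(* [H] reads off as a subgroup of the order-[p] group [J/N] containing a
   nontrivial element; by Lagrange it is everything. *)
Lemma prime_transversal_maximal (H : B -> Prop) :
  (forall x, N x -> H x) -> (forall x y, H x -> H y -> H (x ⊕ y)) ->
  (exists h, [/\ J h, H h & ~ N h]) -> forall x, J x -> H x.
Proof.
move=> NH HD [h [Jh Hh nNh]].
have H_congr x y : congr N x y -> H y -> H x.
  by move=> xy Hy; rewrite -(baddNKr y x); apply: HD => //; apply: NH.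
have H1 : H (f oneq) by apply: NH; apply/congr0P; rewrite -(idxP J0).
pose K := [pred i : 'I_p | `[< H (f i) >]].
have dvdKp : #|K| %| p.
  apply: (card_mul_closed_dvdn mulqA mul1q mulVq); first exact: asboolT H1.
  move=> i j /asboolP Hi /asboolP Hj; apply/asboolP.
  by apply: H_congr (congr_sym (idxP (fJD i j))) (HD _ _ Hi Hj).
have K_gt1 : 1 < #|K|.
  apply/card_gt1P; exists oneq, (idx h); split; rewrite ?inE.
  - exact: asboolT H1.
  - exact/asboolP/(H_congr _ _ (congr_sym (idxP Jh)) Hh).
  - apply/eqP=> e; apply: nNh; apply/congr0P.
    by rewrite (idxP Jh) -e -(idxP J0).
have KT : #|K| = #|'I_p|.
  rewrite card_ord; case/primeP: p_pr => _ /(_ _ dvdKp) /pred2P [e|] //.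
  by rewrite e in K_gt1.
move=> x Jx; apply: H_congr (idxP Jx) _.
have /(_ (idx x)) := subset_cardP KT (subset_predT K).
by rewrite !inE => /asboolP.
Qed.

End PrimeFactor.

Lemma nilpotent_central_mod (B : brace) (N J : nsg B) :
  add_nilpotent B -> (exists a, J a /\ ~ N a) ->
  exists a, [/\ J a, ~ N a & forall b, congr N (a ⊕ b) (b ⊕ a)].
Proof.
case=> c nilB [a [Ja nNa]]; have := nilB a; clear nilB.
elim: c a Ja nNa => [|c IH] a Ja nNa /= zeta_a.
  by case: nNa; rewrite zeta_a; apply: nsg0.
have [central_a | /existsNP [b nNab]] :=
  pselect (forall b, congr N (a ⊕ b) (b ⊕ a)); first by exists a.
exact: IH (acomm_nsg b Ja) nNab (zeta_a b).
Qed.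

Section PrimeFactorSocle.
Variables (B : brace) (N J : nsg B).
Hypotheses (NJ : forall x, N x -> J x) (hp : factor_prime_order N J).
Implicit Types a b x y : B.

Lemma prime_factor_maximal (H : B -> Prop) :
  (forall x, N x -> H x) -> (forall x y, H x -> H y -> H (x ⊕ y)) ->
  (exists h, [/\ J h, H h & ~ N h]) -> forall x, J x -> H x.
Proof.
case: hp => p [p_pr [f [fJ f_inj f_cover]]].
exact: (prime_transversal_maximal p_pr fJ f_inj f_cover).
Qed.

Lemma prime_factor_proper : exists a, J a /\ ~ N a.
Proof.
case: hp => p [p_pr [f [fJ f_inj _]]]; have p_gt1 := prime_gt1 p_pr.
apply: contrapT => /forallNP noJN.
have Nf i : i < p -> congr N (f i) bzero.
  move=> lt_ip; apply/congr0P; apply: contrapT => nNf.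
  exact: noJN (f i) (conj (fJ i lt_ip) nNf).
have f01 := congr_trans (Nf 0 (ltnW p_gt1)) (congr_sym (Nf 1 p_gt1)).
by have := f_inj 0 1 (ltnW p_gt1) p_gt1 f01.
Qed.

Hypothesis nilB : add_nilpotent B.

Lemma prime_factor_central a b : J a -> congr N (a ⊕ b) (b ⊕ a).
Proof.
move=> Ja; suff [] : J a /\ forall b, congr N (a ⊕ b) (b ⊕ a) by [].
move: a Ja; apply: prime_factor_maximal.
- by move=> x Nx; split; [apply: NJ | move=> b'; apply: acomm_nsg].
- move=> x y [Jx cx] [Jy cy]; split=> [|b']; first exact: nsgD.
  by rewrite -baddA cy baddA cx baddA.
- have [a [Ja nNa ca]] := nilpotent_central_mod nilB prime_factor_proper.
  by exists a.
Qed.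

Hypotheses (hN : is_ideal N) (hJ : is_ideal J).

(* d y := -y + lambda_a(y) takes values in J, so by centrality of J/N it is
   additive modulo N; its image modulo N is then a subgroup of J/N. *)
Lemma prime_factor_lambda a x : J a -> congr N (blambda a x) x.
Proof.
move=> Ja; have [Na | nNa] := pselect (N a); first exact: ideal_lambda_congr.
pose d y := ⊖ y ⊕ blambda a y.
have dJ y : J (d y) by apply: ideal_lambda_congr.
have dD y z : congr N (d (y ⊕ z)) (d y ⊕ d z).
  have -> : d (y ⊕ z) = ⊖ z ⊕ d y ⊕ blambda a z.
    by rewrite /d boppD blambdaD !baddA.
  have -> : d y ⊕ d z = d y ⊕ ⊖ z ⊕ blambda a z by rewrite /d !baddA.
  by rewrite (prime_factor_central (⊖ z) (dJ y)).
apply: contrapT => nNdx.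
have [_ [b ab]] : J (⊖ a) /\ exists b, congr N (⊖ a) (d b).
  apply: (prime_factor_maximal (H := fun j => J j /\ exists y, congr N j (d y))).
  - move=> y Ny; split; first exact: NJ.
    by exists bzero; rewrite /d blambda0 bopp0 badd0l; apply/congr0P.
  - move=> y z [Jy [y' yy']] [Jz [z' zz']]; split; first exact: nsgD.
    by exists (y' ⊕ z'); rewrite yy' zz' dD.
  - by exists (d x); split=> //; split=> //; exists x.
  - exact: nsgN.
apply/nNa/(ideal_congr_mul hN (b := b)).
rewrite bmul_lambda -[blambda a b](baddNKr b) -/(d b) -ab.
by rewrite -(prime_factor_central b (nsgN Ja)) baddNKr.
Qed.

End PrimeFactorSocle.

Lemma factor_in_soc (B : brace) (I J : B -> Prop) :
  add_nilpotent B -> is_ideal I -> is_ideal J -> (forall x, I x -> J x) ->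
  (factor_inf_cyclic I J /\ (forall x, J x -> in_soc_mod I x))
    \/ factor_prime_order I J ->
  forall x, J x -> in_soc_mod I x.
Proof.
move=> nilB hI hJ IJ [[_ socJ] // | hp] x Jx b.
pose N := ideal_nsg hI; pose J' := ideal_nsg hJ.
split; first exact: (@prime_factor_lambda B N J' IJ hp nilB hI hJ).
exact: (@prime_factor_central B N J' IJ hp nilB).
Qed.

Theorem theorem3p27 (B : brace) :
  supersoluble B ->
  (add_nilpotent B <-> exists n : nat, forall x : B, soc_n n x).
Proof.
case=> n [I [I0 In Iid Iinc Ifac]]; split; last first.
  by case=> m socB; exists m => x; apply: soc_n_sub_zeta_n.
move=> nilB; exists n => x.
suff chain_soc k : k <= n -> forall y, I k y -> soc_n k y.
  exact: chain_soc n (leqnn n) x (In x).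
elim: k => [|k IH] le_kn y Iy; first exact/I0.
apply: in_soc_mod_sub (IH (ltnW le_kn)) _.
exact: factor_in_soc nilB (Iid k (ltnW le_kn)) (Iid k.+1 le_kn)
  (fun z => Iinc k z le_kn) (Ifac k le_kn) y Iy.
Qed.
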